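(* Let $d\ge2$, $N\in\mathbb N$ and $\theta>0$. The $d$-types Moran model $\{k(t)\}_{t\ge0}$ with population size $N$ and symmetric parent-independent mutation at rate $\theta$ is self-dual with duality function $\bar D_N(k,\xi)=\prod_{i=1}^d\frac{k_i!}{(k_i-\xi_i)!}\frac{\Gamma(\frac{2\theta}{d-1})}{\Gamma(\xi_i+\frac{2\theta}{d-1})}$, where $k_d=N-\sum_{i=1}^{d-1}k_i$ and $\xi_d=N-\sum_{i=1}^{d-1}\xi_i$; that is, for all $k,\xi$ in the state space and all $t>0$, $\mathbb E_k\bar D_N(k(t),\xi)=\mathbb E_\xi\bar D_N(k,\xi(t))$, where $\{\xi(t)\}$ is a copy of the same Moran model.
   Context: $\mathbb N_0=\{0,1,2,\dots\}$, $e_i$ the $i$-th unit vector; $\frac{k!}{(k-\xi)!}$ is interpreted as $0$ when $\xi>k$. The state space is $\{k\in\mathbb N_0^{d-1}:\sum_jk_j\le N\}$ and the generator is $\mathscr L^{Mor}_{N,d,\theta}g(k)=\frac12\sum_{1\le i<j\le d-1}\big[k_i(k_j+\frac{2\theta}{d-1})(g(k-e_i+e_j)-g(k))+k_j(k_i+\frac{2\theta}{d-1})(g(k+e_i-e_j)-g(k))\big]+\frac12\sum_{i=1}^{d-1}\big[(N-\sum_{j=1}^{d-1}k_j)(k_i+\frac{2\theta}{d-1})(g(k+e_i)-g(k))+k_i(N-\sum_{j=1}^{d-1}k_j+\frac{2\theta}{d-1})(g(k-e_i)-g(k))\big]$. $\mathbb E_k$ denotes expectation for the process started at $k$. *)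

From HB Require Import structures.
From mathcomp Require Import all_boot all_order all_algebra.
From mathcomp Require Import all_classical all_reals all_analysis.
Unset Printing Implicit Defensive.
Import Order.TTheory GRing.Theory Num.Theory.
Import numFieldNormedType.Exports.
Local Open Scope ring_scope.

(* States: k = (k_1,...,k_{d-1}) encoded as functions 'I_m -> nat with m = d-1. *)
Definition state (m : nat) := 'I_m -> nat.

Definition tot {m : nat} (k : state m) : nat := (\sum_(j < m) k j)%N.

Definition in_space {m : nat} (N : nat) (k : state m) : Prop := (tot k <= N)%N.

Definition mv {m : nat} (k : state m) (i j : 'I_m) : state m :=
  fun l => if l == i then (k l).-1 else if l == j then (k l).+1 else k l.
Definition up {m : nat} (k : state m) (i : 'I_m) : state m :=
  fun l => if l == i then (k l).+1 else k l.
Definition dn {m : nat} (k : state m) (i : 'I_m) : state m :=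
  fun l => if l == i then (k l).-1 else k l.

Definition mutc {R : realType} (d : nat) (theta : R) : R := 2 * theta / (d.-1)%:R.

Definition Lmor {R : realType} (N d : nat) (theta : R)
    (g : state d.-1 -> R) (k : state d.-1) : R :=
  let c := mutc d theta in
  let r := (N - tot k)%N in
  2^-1 * (\sum_(i < d.-1) \sum_(j < d.-1 | (i < j)%N)
      ((k i)%:R * ((k j)%:R + c) * (g (mv k i j) - g k)
       + (k j)%:R * ((k i)%:R + c) * (g (mv k j i) - g k)))
  + 2^-1 * (\sum_(i < d.-1)
      (r%:R * ((k i)%:R + c) * (g (up k i) - g k)
       + (k i)%:R * (r%:R + c) * (g (dn k i) - g k))).

(* Transition semigroup of the (finite-state) chain:
   E_k[g(k(t))] = (exp(t L) g)(k) = sum_{n>=0} t^n/n! (L^n g)(k). *)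
Definition Emor {R : realType} (N d : nat) (theta t : R)
    (g : state d.-1 -> R) (k : state d.-1) : R :=
  limn (series (fun n : nat => t ^+ n / (n`!)%:R * iter n (Lmor N d theta) g k)).

(* k!/(k-xi)! (falling factorial, 0 if xi > k) times Gamma(c)/Gamma(xi+c),
   the latter written as 1 / (c)_xi with the rising factorial
   (c)_xi = c (c+1) ... (c+xi-1). *)
Definition Dterm {R : realType} (c : R) (a b : nat) : R :=
  (a ^_ b)%:R / \prod_(l < b) (c + l%:R).

Definition Dbar {R : realType} (N d : nat) (theta : R)
    (k xi : state d.-1) : R :=
  let c := mutc d theta in
  (\prod_(i < d.-1) Dterm c (k i) (xi i)) * Dterm c (N - tot k)%N (N - tot xi)%N.

(* Every term of the generator moves one individual between two types, either two
   of the first d-1 or one of them and the d-th.  The duality function is a product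
   over types, so on such a term it is Dterm c a x * Dterm c b y times factors the
   move leaves alone, and the term is the two-type Moran generator Lpair.  A direct
   computation with the recursions of the falling and rising factorials shows that
   Lpair is self-dual for Dterm c a x * Dterm c b y; hence L applied in k to D equals
   L applied in xi.  The generators acting in k and in xi commute, so L^n in k equals
   L^n in xi on the state space for every n, and the exponential series agree. *)

From HB Require Import structures.
From mathcomp Require Import all_boot all_order all_algebra.
From mathcomp Require Import all_classical all_reals all_analysis.
From mathcomp Require Import ring zify.
Import Order.TTheory GRing.Theory Num.Theory.
Local Open Scope ring_scope.

Section DualityFunction.
Variables (R : realType) (c : R).
Hypothesis c_gt0 : 0 < c.

Lemma addr_c_gt0 {x : R} : 0 <= x -> 0 < c + x.
Proof. by move=> x_ge0; rewrite ltr_pwDl. Qed.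

Lemma rising_gt0 (x : nat) : 0 < \prod_(l < x) (c + l%:R).
Proof. by apply: prodr_gt0 => l _; rewrite addr_c_gt0. Qed.

Lemma natr_ffactSr (a x : nat) : ((a ^_ x.+1)%:R : R) = (a ^_ x)%:R * (a%:R - x%:R).
Proof.
rewrite ffactnSr natrM; case: (leqP x a) => [le_xa | lt_ax]; first by rewrite natrB.
by rewrite ffact_small // !mul0r.
Qed.

Lemma Dterm0 (a : nat) : Dterm c a 0 = 1.
Proof. by rewrite /Dterm ffactn0 big_ord0 divr1. Qed.

Lemma DtermS (a x : nat) :
  Dterm c a x.+1 = Dterm c a x * (a%:R - x%:R) / (c + x%:R).
Proof.
rewrite /Dterm natr_ffactSr big_ord_recr /=.
have := rising_gt0 x; have := addr_c_gt0 (ler0n R x).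
by move=> /lt0r_neq0 ? /lt0r_neq0 ?; field; apply/andP.
Qed.

Lemma DtermSS (a x : nat) :
  Dterm c a.+1 x.+1 = a.+1%:R * Dterm c a x / (c + x%:R).
Proof.
rewrite /Dterm ffactSS natrM big_ord_recr /=.
have := rising_gt0 x; have := addr_c_gt0 (ler0n R x).
by move=> /lt0r_neq0 ? /lt0r_neq0 ?; field; apply/andP.
Qed.

Lemma Dterm_pred (a x : nat) :
  a%:R * Dterm c a.-1 x = Dterm c a x * (a%:R - x%:R).
Proof.
rewrite /Dterm mulrA -natrM -ffactnS natr_ffactSr.
by have /lt0r_neq0 ? := rising_gt0 x; field.
Qed.

End DualityFunction.

(* Twice the generator of the two-type Moran model with type counts (a, b) and
   mutation constant c; each term of Lmor is of this form in two coordinates. *)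
Definition Lpair {R : realType} (c : R) (g : nat -> nat -> R) (a b : nat) : R :=
  a%:R * (b%:R + c) * (g a.-1 b.+1 - g a b) + b%:R * (a%:R + c) * (g a.+1 b.-1 - g a b).

Lemma eq_Lpair (R : realType) (c : R) (g h : nat -> nat -> R) (a b : nat) :
  (forall a' b', (a' + b' = a + b)%N -> g a' b' = h a' b') ->
  Lpair c g a b = Lpair c h a b.
Proof.
move=> eq_gh; have gab : g a b = h a b by exact: eq_gh.
rewrite /Lpair gab; congr (_ + _); clear gab.
  by case: a eq_gh => [|a] eq_gh; rewrite ?mul0r // eq_gh //=; lia.
by case: b eq_gh => [|b] eq_gh; rewrite ?mul0r // eq_gh //=; lia.
Qed.

Lemma LpairZr (R : realType) (c r : R) (g : nat -> nat -> R) (a b : nat) :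
  Lpair c (fun a' b' => g a' b' * r) a b = Lpair c g a b * r.
Proof. by rewrite /Lpair; ring. Qed.

Lemma Lpair_lin (R : realType) (c s t : R) (g h : nat -> nat -> R) (a b : nat) :
  Lpair c (fun a' b' => s * g a' b' + t * h a' b') a b = s * Lpair c g a b + t * Lpair c h a b.
Proof. by rewrite /Lpair; ring. Qed.

Lemma Lpair_Dterm_dual (R : realType) (c : R) (a b x y : nat) : 0 < c ->
  Lpair c (fun a' b' => Dterm c a' x * Dterm c b' y) a b
  = Lpair c (fun x' y' => Dterm c a x' * Dterm c b y') x y.
Proof.
move=> c_gt0; rewrite /Lpair.
(* Isolate a * Dterm c a.-1 x and b * Dterm c b.-1 y so that Dterm_pred applies. *)
have -> : forall u v w z, a%:R * (b%:R + c) * (u * v - Dterm c a x * Dterm c b y)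
    + b%:R * (a%:R + c) * (w * z - Dterm c a x * Dterm c b y)
  = (b%:R + c) * v * (a%:R * u) + (a%:R + c) * w * (b%:R * z)
    - (a%:R * (b%:R + c) + b%:R * (a%:R + c)) * (Dterm c a x * Dterm c b y).
  by move=> u v w z; ring.
rewrite !Dterm_pred //.
case: x => [|x]; case: y => [|y] /=; rewrite ?DtermSS // !DtermS // ?Dterm0;
  field; rewrite ?lt0r_neq0 ?addr_c_gt0 ?addr_ge0 ?ler0n ?ler01 //.
Qed.

Definition upd {m : nat} (k : state m) (i : 'I_m) (a : nat) : state m :=
  fun l => if l == i then a else k l.

Section Updates.
Context {m : nat}.
Implicit Types (k : state m) (i j : 'I_m) (a b : nat).

Lemma upd_id k i : upd k i (k i) = k.
Proof. by apply: funext => l; rewrite /upd; case: eqP => [->|]. Qed.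

Lemma updC k i j a b : i != j -> upd (upd k i a) j b = upd (upd k j b) i a.
Proof.
move=> neq_ij; apply: funext => l; rewrite /upd /=.
by case: (eqVneq l i) => [->|//]; rewrite (negbTE neq_ij).
Qed.

Lemma mvE k i j : i != j -> mv k i j = upd (upd k i (k i).-1) j (k j).+1.
Proof.
move=> neq_ij; apply: funext => l; rewrite /mv /upd /=.
case: (eqVneq l i) => [->|_]; last by case: eqP => [->|].
by case: eqP neq_ij => [->|]; rewrite ?eqxx.
Qed.

Lemma upE k i : up k i = upd k i (k i).+1.
Proof. by apply: funext => l; rewrite /up /upd; case: eqP => [->|]. Qed.

Lemma dnE k i : dn k i = upd k i (k i).-1.
Proof. by apply: funext => l; rewrite /dn /upd; case: eqP => [->|]. Qed.

Lemma tot_upd k i a : (tot (upd k i a) + k i = tot k + a)%N.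
Proof.
rewrite /tot (bigD1 i) //= [in RHS](bigD1 i) //= /upd eqxx.
rewrite (eq_bigr k) => [|l /negbTE -> //]; lia.
Qed.

Lemma tot_upd2 k i j a b : i != j ->
  (tot (upd (upd k i a) j b) + k i + k j = tot k + a + b)%N.
Proof.
move=> neq_ij; have kj : upd k i a j = k j by rewrite /upd eq_sym (negbTE neq_ij).
have := tot_upd (upd k i a) j b; rewrite kj.
by have := tot_upd k i a; lia.
Qed.

End Updates.

Section Intertwining.
Variables (X : Type) (E : X -> X -> Prop) (A B : X -> X).
Hypotheses (E_refl : forall F, E F F)
  (E_trans : forall F G H, E F G -> E G H -> E F H).
Hypotheses (A_E : forall F G, E F G -> E (A F) (A G))
  (B_E : forall F G, E F G -> E (B F) (B G)).
Hypothesis AB_comm : forall F, A (B F) = B (A F).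

Lemma iter_intertwine F : E (A F) (B F) -> forall n, E (iter n A F) (iter n B F).
Proof.
move=> AF_BF; have iterA_E n G H : E G H -> E (iter n A G) (iter n A H).
  by elim: n => //= n IHn /IHn /A_E.
have iterA_B n G : iter n A (B G) = B (iter n A G) by elim: n => //= n ->.
elim=> [|n IHn] //; rewrite iterSr iterS.
by apply: E_trans (iterA_E n _ _ AF_BF) _; rewrite iterA_B; apply: B_E.
Qed.

End Intertwining.

Section Moran.
Variables (R : realType) (N d : nat) (theta : R).
Local Notation c := (mutc d theta).
Local Notation L := (Lmor N d theta).
Local Notation D := (Dbar N d theta).
Implicit Types (k xi : state d.-1) (i j : 'I_d.-1) (g h : state d.-1 -> R)
  (F G : state d.-1 -> state d.-1 -> R).

Lemma Dbar_upd2 k xi i j a b x y : i != j ->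
  (a + b = k i + k j)%N -> (x + y = xi i + xi j)%N ->
  D (upd (upd k i a) j b) (upd (upd xi i x) j y)
  = Dterm c a x * Dterm c b y
    * (\prod_(l | (l != i) && (l != j)) Dterm c (k l) (xi l)
       * Dterm c (N - tot k) (N - tot xi)).
Proof.
move=> neq_ij sum_ab sum_xy.
have tot_k : tot (upd (upd k i a) j b) = tot k by have := tot_upd2 k i j a b neq_ij; lia.
have tot_xi : tot (upd (upd xi i x) j y) = tot xi by have := tot_upd2 xi i j x y neq_ij; lia.
rewrite /Dbar tot_k tot_xi (bigD1 i) //= (bigD1 j) 1?eq_sym //= !mulrA.
rewrite /upd !eqxx (negbTE neq_ij) /=; congr (_ * _ * _ * _).
by apply: eq_bigr => l /andP[/negbTE -> /negbTE ->].
Qed.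

Lemma Dbar_upd k xi i a b x y : in_space N k -> in_space N xi ->
  (a + b = k i + (N - tot k))%N -> (x + y = xi i + (N - tot xi))%N ->
  D (upd k i a) (upd xi i x)
  = Dterm c a x * Dterm c b y * \prod_(l | l != i) Dterm c (k l) (xi l).
Proof.
rewrite /in_space => le_k le_xi sum_ab sum_xy.
have rest_k : (N - tot (upd k i a) = b)%N by have := tot_upd k i a; lia.
have rest_xi : (N - tot (upd xi i x) = y)%N by have := tot_upd xi i x; lia.
rewrite /Dbar rest_k rest_xi (bigD1 i) //= /upd eqxx.
rewrite (eq_bigr (fun l => Dterm c (k l) (xi l))) => [|l /negbTE -> //]; ring.
Qed.

Lemma LmorE g k : L g k =
  2^-1 * (\sum_(i < d.-1) \sum_(j < d.-1 | (i < j)%N)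
            Lpair c (fun a b => g (upd (upd k i a) j b)) (k i) (k j))
  + 2^-1 * (\sum_(i < d.-1) Lpair c (fun a _ => g (upd k i a)) (k i) (N - tot k)).
Proof.
rewrite /Lmor /Lpair; congr (_ * _ + _ * _).
  apply: eq_bigr => i _; apply: eq_bigr => j lt_ij.
  have neq_ij : i != j by rewrite neq_ltn lt_ij.
  by rewrite mvE // mvE 1?eq_sym // [upd (upd k j _) i _]updC 1?eq_sym // !upd_id.
by apply: eq_bigr => i _; rewrite upE dnE upd_id addrC.
Qed.

Lemma eq_Lmor g h k : (forall x, g x = h x) -> L g k = L h k.
Proof. by move=> /funext ->. Qed.

Lemma Lmor_lin s t g h k : L (fun x => s * g x + t * h x) k = s * L g k + t * L h k.
Proof.
rewrite !LmorE.
have regroup (X Y X' Y' : R) : s * (2^-1 * X + 2^-1 * Y) + t * (2^-1 * X' + 2^-1 * Y')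
    = 2^-1 * (s * X + t * X') + 2^-1 * (s * Y + t * Y') by ring.
rewrite regroup; congr (_ * _ + _ * _); rewrite !mulr_sumr -big_split.
  apply: eq_bigr => i _; rewrite !mulr_sumr -big_split.
  by apply: eq_bigr => j _; rewrite Lpair_lin.
by apply: eq_bigr => i _; rewrite Lpair_lin.
Qed.

Lemma Lmor_add g h k : L (fun x => g x + h x) k = L g k + L h k.
Proof.
by rewrite -[L g k]mul1r -[L h k]mul1r -Lmor_lin; apply: eq_Lmor => x; rewrite !mul1r.
Qed.

Lemma Lmor_sub g h k : L (fun x => g x - h x) k = L g k - L h k.
Proof.
rewrite -[L g k]mul1r -mulN1r -Lmor_lin.
by apply: eq_Lmor => x; rewrite mul1r mulN1r.
Qed.

Lemma Lmor_sum (I : Type) (r : seq I) (P : pred I) (G : I -> state d.-1 -> R) k :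
  L (fun x => \sum_(i <- r | P i) G i x) k = \sum_(i <- r | P i) L (G i) k.
Proof.
elim: r => [|i r IHr].
  rewrite big_nil; under eq_Lmor => x do rewrite big_nil.
  by have := Lmor_lin 0 0 (fun _ => 0) (fun _ => 0) k; rewrite /= !mul0r addr0.
rewrite big_cons; under eq_Lmor => x do rewrite big_cons.
by case: (P i); rewrite ?Lmor_add IHr.
Qed.

Lemma Lmor_Lpair (G : state d.-1 -> nat -> nat -> R) a b k :
  L (fun x => Lpair c (G x) a b) k = Lpair c (fun a' b' => L (G^~ a' ^~ b') k) a b.
Proof. by rewrite /Lpair Lmor_lin !Lmor_sub. Qed.

Lemma Lmor_comm (G : state d.-1 -> state d.-1 -> R) k xi :
  L (fun x => L (G x) xi) k = L (fun y => L (G^~ y) k) xi.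
Proof.
under eq_Lmor => x do rewrite LmorE.
rewrite Lmor_lin !Lmor_sum [RHS]LmorE.
congr (_ * _ + _ * _); apply: eq_bigr => i _; rewrite ?Lmor_sum ?Lmor_Lpair //.
by apply: eq_bigr => j _; rewrite Lmor_Lpair.
Qed.

Lemma Lmor_local g h k : in_space N k ->
  (forall k', in_space N k' -> g k' = h k') -> L g k = L h k.
Proof.
rewrite /in_space => le_k eq_gh; rewrite !LmorE.
congr (_ * _ + _ * _); apply: eq_bigr => i _.
  apply: eq_bigr => j lt_ij; have neq_ij : i != j by rewrite neq_ltn lt_ij.
  apply: eq_Lpair => a b sum_ab; apply: eq_gh; rewrite /in_space.
  by have := tot_upd2 k i j a b neq_ij; lia.
apply: eq_Lpair => a b sum_ab; apply: eq_gh; rewrite /in_space.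
by have := tot_upd k i a; lia.
Qed.

Lemma Lmor_Dbar_dual k xi : 0 < c -> in_space N k -> in_space N xi ->
  L (D^~ xi) k = L (D k) xi.
Proof.
move=> c_gt0 le_k le_xi; rewrite !LmorE; congr (_ * _ + _ * _); apply: eq_bigr => i _.
  apply: eq_bigr => j lt_ij; have neq_ij : i != j by rewrite neq_ltn lt_ij.
  have upd2_id (u : state d.-1) : upd (upd u i (u i)) j (u j) = u by rewrite !upd_id.
  pose rest := \prod_(l | (l != i) && (l != j)) Dterm c (k l) (xi l)
    * Dterm c (N - tot k) (N - tot xi).
  rewrite (@eq_Lpair _ _ _ (fun a b => Dterm c a (xi i) * Dterm c b (xi j) * rest)); last first.
    by move=> a b sum_ab; rewrite -{1}(upd2_id xi) Dbar_upd2.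
  rewrite [RHS](@eq_Lpair _ _ _ (fun x y => Dterm c (k i) x * Dterm c (k j) y * rest)); last first.
    by move=> x y sum_xy; rewrite -{1}(upd2_id k) Dbar_upd2.
  by rewrite !LpairZr Lpair_Dterm_dual.
pose rest := \prod_(l | l != i) Dterm c (k l) (xi l).
rewrite (@eq_Lpair _ _ _ (fun a b => Dterm c a (xi i) * Dterm c b (N - tot xi) * rest)); last first.
  by move=> a b sum_ab; rewrite -{1}(upd_id xi i) (Dbar_upd _ _ _ _ b _ (N - tot xi)).
rewrite [RHS](@eq_Lpair _ _ _ (fun x y => Dterm c (k i) x * Dterm c (N - tot k) y * rest)); last first.
  by move=> x y sum_xy; rewrite -{1}(upd_id k i) (Dbar_upd _ _ _ _ (N - tot k) _ y).
by rewrite !LpairZr Lpair_Dterm_dual.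
Qed.

(* Off the state space N - tot k truncates, so identities are only claimed on it. *)
Definition eq_on_space (F G : state d.-1 -> state d.-1 -> R) :=
  forall k xi, in_space N k -> in_space N xi -> F k xi = G k xi.

Definition Lmor_fst (F : state d.-1 -> state d.-1 -> R) k xi := L (F^~ xi) k.
Definition Lmor_snd (F : state d.-1 -> state d.-1 -> R) k xi := L (F k) xi.

Lemma iter_Lmor_fst n F xi : iter n L (F^~ xi) = (iter n Lmor_fst F)^~ xi.
Proof. by elim: n => //= n ->. Qed.

Lemma iter_Lmor_snd n F k : iter n L (F k) = iter n Lmor_snd F k.
Proof. by elim: n => //= n ->. Qed.

Lemma iter_Lmor_Dbar_dual n : 0 < c ->
  eq_on_space (iter n Lmor_fst D) (iter n Lmor_snd D).
Proof.
move=> c_gt0; apply: iter_intertwine => //.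
- by move=> F G H eq_FG eq_GH k xi le_k le_xi; rewrite eq_FG ?eq_GH.
- by move=> F G eq_FG k xi le_k le_xi; apply: Lmor_local => // k' le_k'; apply: eq_FG.
- by move=> F G eq_FG k xi le_k le_xi; apply: Lmor_local => // xi' le_xi'; apply: eq_FG.
- by move=> F; apply: funext => k; apply: funext => xi; apply: Lmor_comm.
- by move=> k xi le_k le_xi; apply: Lmor_Dbar_dual.
Qed.

End Moran.

Theorem theorem5p2 (R : realType) (d N : nat) (theta : R) :
  (2 <= d)%N -> 0 < theta ->
  forall k xi : state d.-1, in_space N k -> in_space N xi ->
  forall t : R, 0 < t ->
    Emor N d theta t (fun k' => Dbar N d theta k' xi) k
    = Emor N d theta t (fun xi' => Dbar N d theta k xi') xi.
Proof.
move=> le2d theta_gt0 k xi le_k le_xi t _.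
have c_gt0 : 0 < mutc d theta by rewrite /mutc divr_gt0 ?mulr_gt0 ?ltr0n //; lia.
rewrite /Emor; congr (limn (series _)); apply: funext => n.
by rewrite iter_Lmor_fst iter_Lmor_snd iter_Lmor_Dbar_dual.
Qed.
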